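(* Let $p_n$ be the number of trees $t\in\mathcal{T}_n$ with $\gamma(t)\le 2$ (equivalently, trees having no subtree that is a caterpillar with 3 leaves, a ''pitchfork''); $p_n$ is the coefficient of $x^n$ in $\frac{1-\sqrt{1-4x+8x^3}}{2}$. Then, with $R=\frac14(\sqrt5-1)$, $$\lim_{n\to\infty}\frac{\frac14\sqrt{\frac{4R-24R^3}{\pi n^3}}\left(\frac1R\right)^n}{p_n}=1.$$
   Context: $\mathcal{T}_n$ is the set of ordered rooted binary trees (every internal node has exactly two ordered children) with $n$ leaves. A tree is a caterpillar if every node is either a leaf or has at least one leaf among its direct children. The subtree of $t$ at a node $v$ consists of $v$ and all its descendants, and $\gamma(t)$ is the largest number of leaves of a caterpillar occurring as the subtree of $t$ at some node. *)

From Stdlib Require Import Reals List Arith.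
Import ListNotations.

Inductive tree : Type :=
| Leaf : tree
| Node : tree -> tree -> tree.

Fixpoint leaves (t : tree) : nat :=
  match t with
  | Leaf => 1
  | Node l r => leaves l + leaves r
  end.

Definition is_leaf (t : tree) : bool :=
  match t with Leaf => true | Node _ _ => false end.

Fixpoint is_caterpillar (t : tree) : bool :=
  match t with
  | Leaf => true
  | Node l r => (is_leaf l || is_leaf r) && is_caterpillar l && is_caterpillar r
  end.

Fixpoint subtrees (t : tree) : list tree :=
  match t with
  | Leaf => [Leaf]
  | Node l r => t :: (subtrees l ++ subtrees r)
  end.

Definition gamma (t : tree) : nat :=
  list_max (map leaves (filter is_caterpillar (subtrees t))).

Definition counts_pitchfork_free (n c : nat) : Prop :=
  exists l : list tree,
    NoDup l /\ length l = c /\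
    (forall t, In t l <-> (leaves t = n /\ gamma t <= 2)).

(* 1. Combinatorics.  gamma t <= 2 iff no subtree of t has three leaves; an
      explicit enumeration gives p_0 = 0, p_1 = 1 and, for n >= 2, the
      root-splitting recurrence p_n + 2 [n = 3] = sum_k p_k p_(n-k), i.e.
      S = 1 - 2 P satisfies S^2 = 1 - 4 z + 8 z^3.
   2. Formal power series (real sequences with the Cauchy product, handled
      through polynomial truncations).  The coefficients b of sqrt (1 - z)
      square to 1 - z; as 1 - 4 rho z + 8 rho^3 z^3 = (1 - z)(1 - alpha z)(1 - beta z)
      and a series with constant term 1 is determined by its square,
      rho^n S_n = (b * h)_n where h are the coefficients of
      sqrt ((1 - alpha z)(1 - beta z)).
   3. Analysis.  Wallis integrals give n^(3/2) b_n -> -1 / (2 sqrt pi); since h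
      decays geometrically (|alpha|, |beta| < 1), Tannery's theorem transfers
      this to n^(3/2) (b * h)_n -> -H / (2 sqrt pi), where H = sum h and, by
      Mertens' theorem, H^2 = (1 - alpha)(1 - beta) = 4 rho - 24 rho^3.
   The theorem follows by dividing the limit by itself. *)

From Stdlib Require Import Reals Lra Lia List Arith.
From mathcomp Require all_boot all_algebra ring lra Rstruct.
From Coquelicot Require Import Coquelicot.
Import ListNotations.
Open Scope R_scope.

Definition conv (a c : nat -> R) (n : nat) : R :=
  sum_f_R0 (fun k => a k * c (n - k)%nat) n.

(* A tree has gamma at most 2 iff none of its subtrees is a pitchfork; since
   the only trees with three leaves are the two pitchforks, this is a
   boolean test on subtree sizes. *)
Fixpoint pitchfork_free (t : tree) : bool :=
  match t with
  | Leaf => true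
  | Node l r =>
      pitchfork_free l && pitchfork_free r && negb (Nat.eqb (leaves l + leaves r) 3)
  end.

Lemma leaves_pos t : (1 <= leaves t)%nat.
Proof. induction t; simpl; lia. Qed.

Lemma leaves_1 t : leaves t = 1%nat -> t = Leaf.
Proof.
  destruct t as [|l r]; simpl; auto.
  pose proof (leaves_pos l); pose proof (leaves_pos r); lia.
Qed.

Lemma leaves_2 t : leaves t = 2%nat -> t = Node Leaf Leaf.
Proof.
  destruct t as [|l r]; simpl; [lia|]. intros H.
  pose proof (leaves_pos l); pose proof (leaves_pos r).
  rewrite (leaves_1 l), (leaves_1 r); auto; lia.
Qed.

Lemma gamma_node l r : gamma (Node l r) =
  Nat.max (if is_caterpillar (Node l r) then (leaves l + leaves r)%nat else 0%nat)
          (Nat.max (gamma l) (gamma r)).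
Proof.
  unfold gamma. cbn [subtrees filter]. rewrite filter_app.
  destruct (is_caterpillar (Node l r));
    [rewrite map_cons; change (list_max (?a :: ?s)) with (Nat.max a (list_max s))|];
    rewrite map_app, list_max_app; simpl; lia.
Qed.

Lemma caterpillar_le_gamma t : is_caterpillar t = true -> (leaves t <= gamma t)%nat.
Proof.
  intros H. destruct t as [|l r].
  - unfold gamma. simpl. lia.
  - rewrite gamma_node, H. simpl. lia.
Qed.

Lemma gamma_le_2_iff t : (gamma t <= 2)%nat <-> pitchfork_free t = true.
Proof.
  induction t as [|l IHl r IHr].
  - unfold gamma; simpl. split; auto.
  - rewrite gamma_node. simpl pitchfork_free.
    rewrite !Bool.andb_true_iff, Bool.negb_true_iff, Nat.eqb_neq, <- IHl, <- IHr.
    pose proof (leaves_pos l); pose proof (leaves_pos r).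
    split.
    + intros Hg. repeat split; try lia. intros E.
      (* a subtree with three leaves is a pitchfork, hence a caterpillar *)
      assert (Hcat : is_caterpillar (Node l r) = true).
      { assert (leaves l = 1 /\ leaves r = 2 \/ leaves l = 2 /\ leaves r = 1)%nat
          as [[A B]|[A B]] by lia.
        - rewrite (leaves_1 l A), (leaves_2 r B). reflexivity.
        - rewrite (leaves_2 l A), (leaves_1 r B). reflexivity. }
      rewrite Hcat in Hg. lia.
    + intros [[Hl Hr] H3].
      destruct (is_caterpillar (Node l r)) eqn:C; [|lia].
      simpl in C. rewrite !Bool.andb_true_iff, Bool.orb_true_iff in C.
      destruct C as [[[A|A] Cl] Cr].
      * destruct l; [|discriminate]. cbn [leaves] in *.
        pose proof (caterpillar_le_gamma r Cr). lia.
      * destruct r; [|discriminate]. cbn [leaves] in *.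
        pose proof (caterpillar_le_gamma l Cl). lia.
Qed.

(* Enumeration of the pitchfork-free trees with n leaves, by splitting at the
   root; the fuel only bounds the recursion depth. *)
Fixpoint pf_trees (fuel n : nat) : list tree :=
  match fuel with
  | O => []
  | S fuel' =>
    if Nat.eqb n 1 then [Leaf]
    else if Nat.eqb n 3 then []
    else flat_map (fun k => flat_map (fun l => map (Node l) (pf_trees fuel' (n - k)))
                                     (pf_trees fuel' k))
                  (seq 0 (S n))
  end.

Lemma pf_trees_sound f n t :
  In t (pf_trees f n) -> leaves t = n /\ pitchfork_free t = true.
Proof.
  revert n t; induction f as [|f IH]; intros n t H; cbn [pf_trees] in H; [contradiction|].
  destruct (Nat.eqb_spec n 1); [destruct H as [<-|[]]; auto|].
  destruct (Nat.eqb_spec n 3); [contradiction|].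
  apply in_flat_map in H as [k [Hk H]].
  apply in_flat_map in H as [l [Hl H]].
  apply in_map_iff in H as [r [<- Hr]].
  apply IH in Hl as [Hl1 Hl2]. apply IH in Hr as [Hr1 Hr2]. apply in_seq in Hk.
  simpl. rewrite Hl2, Hr2, Hl1, Hr1. split; [lia|].
  simpl. apply Bool.negb_true_iff, Nat.eqb_neq. lia.
Qed.

Lemma pf_trees_complete f n t :
  (n <= f)%nat -> leaves t = n -> pitchfork_free t = true -> In t (pf_trees f n).
Proof.
  revert n t; induction f as [|f IH]; intros n t Hn Hl Hp.
  - pose proof (leaves_pos t); lia.
  - cbn [pf_trees]. destruct (Nat.eqb_spec n 1).
    + rewrite (leaves_1 t) by congruence. left; auto.
    + destruct t as [|l r]; [simpl in Hl; lia|].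
      simpl in Hp, Hl. rewrite !Bool.andb_true_iff, Bool.negb_true_iff, Nat.eqb_neq in Hp.
      destruct Hp as [[Hpl Hpr] H3].
      destruct (Nat.eqb_spec n 3); [lia|].
      pose proof (leaves_pos l); pose proof (leaves_pos r).
      apply in_flat_map. exists (leaves l). split; [apply in_seq; lia|].
      apply in_flat_map. exists l. split; [apply IH; auto; lia|].
      apply in_map. apply IH; auto; lia.
Qed.

Lemma NoDup_flat_map {A B} (g : A -> list B) (l : list A) :
  NoDup l -> (forall x, NoDup (g x)) ->
  (forall x y z, In z (g x) -> In z (g y) -> x = y) -> NoDup (flat_map g l).
Proof.
  intros Hl Hg Hd. induction Hl as [|x l Hx Hl IH]; simpl; [constructor|].
  apply NoDup_app; auto.
  intros z Hz1 Hz2. apply in_flat_map in Hz2 as [y [Hy Hz2]].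
  assert (x = y) by (eapply Hd; eauto). subst. contradiction.
Qed.

Lemma pf_trees_nodup f n : NoDup (pf_trees f n).
Proof.
  revert n; induction f as [|f IH]; intros n; cbn [pf_trees]; [constructor|].
  destruct (Nat.eqb n 1); [constructor; [simpl; auto|constructor]|].
  destruct (Nat.eqb n 3); [constructor|].
  apply NoDup_flat_map; [apply seq_NoDup| |].
  - intros k. apply NoDup_flat_map; auto.
    + intros l. apply NoDup_map_NoDup_ForallPairs; auto.
      intros x y _ _ H. injection H; auto.
    + intros x y z H1 H2. apply in_map_iff in H1 as [r1 [<- _]].
      apply in_map_iff in H2 as [r2 [H _]]. injection H; auto.
  - intros x y z H1 H2.
    apply in_flat_map in H1 as [l1 [Hl1 H1]]. apply in_map_iff in H1 as [r1 [<- _]].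
    apply in_flat_map in H2 as [l2 [Hl2 H2]]. apply in_map_iff in H2 as [r2 [H _]].
    injection H; intros _ ->.
    apply pf_trees_sound in Hl1 as [A _]. apply pf_trees_sound in Hl2 as [B _].
    congruence.
Qed.

Section PitchforkFreeCounts.
Variable p : nat -> nat.
Hypothesis hp : forall n, counts_pitchfork_free n (p n).

Lemma length_pf_trees f n : (n <= f)%nat -> length (pf_trees f n) = p n.
Proof.
  intros Hn. destruct (hp n) as [l [Hnd [Hlen Hin]]]. rewrite <- Hlen.
  apply Nat.le_antisymm; apply NoDup_incl_length; try apply pf_trees_nodup; auto.
  - intros t Ht. apply Hin. apply pf_trees_sound in Ht as [A B].
    split; auto. apply gamma_le_2_iff; auto.
  - intros t Ht. apply Hin in Ht as [A B].
    apply pf_trees_complete; auto. apply gamma_le_2_iff; auto.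
Qed.

Lemma pf_trees_0 f : pf_trees f 0 = [].
Proof. induction f; simpl; auto. rewrite IHf. reflexivity. Qed.

Lemma pf_count_0 : p 0 = 0%nat.
Proof. rewrite <- (length_pf_trees 0 0); auto. Qed.

Lemma pf_count_1 : p 1 = 1%nat.
Proof. rewrite <- (length_pf_trees 1 1); auto. Qed.

Lemma INR_list_sum_seq g n :
  INR (list_sum (map g (seq 0 (S n)))) = sum_f_R0 (fun k => INR (g k)) n.
Proof.
  induction n.
  - simpl. rewrite Nat.add_0_r. reflexivity.
  - rewrite (seq_S (S n)), map_app, list_sum_app, plus_INR, IHn. simpl.
    rewrite Nat.add_0_r. reflexivity.
Qed.

(* Splitting at the root: P = z + P^2 - 2 z^3 for the generating function P,
   the correction removing the two pitchforks. *)
Lemma pf_count_recurrence n : (2 <= n)%nat ->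
  INR (p n) + (if Nat.eqb n 3 then 2 else 0) = conv (fun k => INR (p k)) (fun k => INR (p k)) n.
Proof.
  intros Hn. destruct (Nat.eqb_spec n 3).
  - subst. unfold conv. simpl sum_f_R0.
    rewrite <- (length_pf_trees 2 2), <- (length_pf_trees 3 3), pf_count_0, pf_count_1 by lia.
    simpl. lra.
  - rewrite Rplus_0_r, <- (length_pf_trees n n) by lia.
    destruct n as [|f]; [lia|]. cbn [pf_trees].
    rewrite (proj2 (Nat.eqb_neq (S f) 1)), (proj2 (Nat.eqb_neq (S f) 3)) by lia.
    rewrite length_flat_map, INR_list_sum_seq.
    apply sum_eq. intros k Hk.
    rewrite (flat_map_constant_length (c := length (pf_trees f (S f - k))))
      by (intros; apply length_map).
    rewrite mult_INR.
    destruct (Nat.eq_dec k 0) as [->|Hk0]; [rewrite pf_trees_0, pf_count_0; simpl; lra|].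
    destruct (Nat.eq_dec k (S f)) as [->|Hkf].
    + rewrite Nat.sub_diag, pf_trees_0, pf_count_0. simpl. lra.
    + rewrite !length_pf_trees by lia. reflexivity.
Qed.

End PitchforkFreeCounts.

Module FormalSeries.
Import all_boot all_algebra ring lra GRing.Theory Num.Theory.
Local Open Scope ring_scope.

Section Cauchy.
Context {F : realFieldType}.
Implicit Types (a c : nat -> F) (p q : {poly F}).

Definition cauchy a c (n : nat) : F := \sum_(k < n.+1) a k * c (n - k)%N.

(* Identities of formal series are checked on polynomial truncations:
   trunc N a keeps the first N coefficients and agree N relates polynomials
   with the same first N coefficients. *)
Definition trunc N a : {poly F} := \poly_(i < N) a i.
Definition agree N p q := forall i, (i < N)%N -> p`_i = q`_i.

Lemma agree_refl N p : agree N p p. Proof. by []. Qed.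

Lemma agree_sym {N p q} : agree N p q -> agree N q p.
Proof. by move=> h i hi; rewrite h. Qed.

Lemma agree_trans {N p q r} : agree N p q -> agree N q r -> agree N p r.
Proof. by move=> h1 h2 i hi; rewrite h1 ?h2. Qed.

Lemma agree_mul {N p p' q q'} : agree N p p' -> agree N q q' -> agree N (p * q) (p' * q').
Proof.
  move=> hp hq i hi; rewrite !coefM; apply: eq_bigr => j _.
  have hj : (j < N)%N by apply: leq_ltn_trans hi; rewrite -ltnS.
  have hij : (i - j < N)%N by apply: leq_ltn_trans hi; apply: leq_subr.
  by rewrite hp // hq.
Qed.

Lemma trunc_coef N a i : (i < N)%N -> (trunc N a)`_i = a i.
Proof. by move=> hi; rewrite coef_poly hi. Qed.

Lemma agree_trunc N a p : (forall i, a i = p`_i) -> agree N (trunc N a) p.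
Proof. by move=> h i hi; rewrite trunc_coef. Qed.

Lemma trunc_cauchy N a c : agree N (trunc N (cauchy a c)) (trunc N a * trunc N c).
Proof.
  move=> i hi; rewrite trunc_coef // coefM; apply: eq_bigr => j _.
  have hj : (j < N)%N by apply: leq_ltn_trans hi; rewrite -ltnS.
  have hij : (i - j < N)%N by apply: leq_ltn_trans hi; apply: leq_subr.
  by rewrite !trunc_coef.
Qed.

Lemma cauchy_ext a a' c c' n : (forall i, a i = a' i) -> (forall i, c i = c' i) ->
  cauchy a c n = cauchy a' c' n.
Proof. by move=> ha hc; apply: eq_bigr => i _; rewrite ha hc. Qed.

Lemma cauchy0 a c : cauchy a c 0 = a 0%N * c 0%N.
Proof. by rewrite /cauchy big_ord1. Qed.

Lemma cauchyC a c n : cauchy a c n = cauchy c a n.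
Proof.
  have h1 := trunc_cauchy n.+1 a c n (ltnSn n).
  have h2 := trunc_cauchy n.+1 c a n (ltnSn n).
  by rewrite !trunc_coef // in h1 h2; rewrite h1 h2 mulrC.
Qed.

Lemma cauchy_scale a c x n :
  cauchy (fun i => a i * x ^+ i) (fun i => c i * x ^+ i) n = cauchy a c n * x ^+ n.
Proof.
  rewrite /cauchy mulr_suml; apply: eq_bigr => i _.
  have hi : (i <= n)%N by rewrite -ltnS.
  have -> : x ^+ n = x ^+ i * x ^+ (n - i) by rewrite -exprD subnKC.
  ring.
Qed.

Lemma cauchy_square_S a m : cauchy a a m.+1 =
  a 0%N * a m.+1 *+ 2 + \sum_(i < m) a i.+1 * a (m - i)%N.
Proof.
  rewrite /cauchy big_ord_recl big_ord_recr /= subn0 subnn.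
  rewrite (eq_bigr (fun i : 'I_m => a i.+1 * a (m - i)%N)); last first.
    by move=> i _; rewrite /bump /= add1n subSS.
  rewrite /bump /= add1n mulr2n; ring.
Qed.

Lemma cauchy_sqrt_unique a c : a 0%N = 1 -> c 0%N = 1 ->
  (forall n, cauchy a a n = cauchy c c n) -> forall n, a n = c n.
Proof.
  move=> a0 c0 h n; elim: n {-2}n (leqnn n) => [|m IH] n hn.
    by move: hn; rewrite leqn0 => /eqP ->; rewrite a0 c0.
  case: (leqP n m) => [hnm|hmn]; first exact: IH.
  have -> : n = m.+1 by apply/eqP; rewrite eqn_leq hn hmn.
  have := h m.+1; rewrite !cauchy_square_S a0 c0.
  have -> : \sum_(i < m) a i.+1 * a (m - i)%N = \sum_(i < m) c i.+1 * c (m - i)%N.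
    apply: eq_bigr => i _; have hi := ltn_ord i.
    by rewrite !IH // ?leq_subr // ltnW.
  rewrite !mul1r !mulr2n => H; lra.
Qed.

Section SqrtOneMinus.
(* b is the coefficient sequence of sqrt (1 - z): b 0 = 1 and
   2 (i + 1) b (i + 1) = (2 i - 1) b i, the recurrence encoding the
   differential equation 2 (1 - z) B' + B = 0. *)
Variable b : nat -> F.
Hypothesis b0 : b 0%N = 1.
Hypothesis b_rec : forall i, b i.+1 * i.+1%:R * 2 = b i * (i%:R * 2 - 1).

Lemma coef_derivE p i : p^`()`_i = p`_i.+1 * i.+1%:R.
Proof. by rewrite coef_deriv mulr_natr. Qed.

Lemma sqrt_ode N : agree N.-1 ((1 - 'X) * (trunc N b)^`() *+ 2 + trunc N b) 0.
Proof.
  move=> j hj; rewrite coef0 coefD coefMn mulrBl mul1r coefB coefXM !coef_derivE.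
  have hj1 : (j.+1 < N)%N by rewrite -ltn_predRL.
  have hj0 : (j < N)%N by apply: ltnW.
  case: j hj hj1 hj0 => [|k] hj hj1 hj0; rewrite /= !trunc_coef //.
    by have := b_rec 0; rewrite !mul0r b0 => H; lra.
  by have := b_rec k.+1 => H; lra.
Qed.

(* Hence G = B^2 satisfies (1 - z) G' + G = 0, which gives a recurrence
   for the coefficients of the square. *)
Lemma cauchy_sqrt_rec i : cauchy b b i.+1 * i.+1%:R = cauchy b b i * (i%:R - 1).
Proof.
  pose N := i.+2; pose B := trunc N b; pose G := B * B.
  have hE : agree N.-1 ((1 - 'X) * G^`() + G) 0.
    have -> : (1 - 'X) * G^`() + G = B * ((1 - 'X) * B^`() *+ 2 + B)
      by rewrite /G derivM mulr2n; ring.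
    rewrite -(mulr0 B); apply: agree_mul; [exact: agree_refl | exact: sqrt_ode].
  have hG : agree N G (trunc N (cauchy b b)) by apply: agree_sym; apply: trunc_cauchy.
  have := hE i (ltnSn i).
  rewrite coef0 coefD mulrBl mul1r coefB coefXM !coef_derivE.
  have -> : (if i == 0%N then 0 else G`_i.-1.+1 * i.-1.+1%:R) = G`_i * i%:R
    by case: (i) => [|k] //=; rewrite mulr0.
  rewrite (hG i.+1) // (hG i) // !trunc_coef // => H; lra.
Qed.

Lemma cauchy_sqrt_sq n : cauchy b b n = if n == 0%N then 1 else if n == 1%N then -1 else 0.
Proof.
  have g0 : cauchy b b 0 = 1 by rewrite cauchy0 b0 mulr1.
  have g1 : cauchy b b 1 = -1 by have := cauchy_sqrt_rec 0; rewrite g0 mulr1 mul1r sub0r.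
  case: n => [|[|n]] //=.
  elim: n => [|n IH].
    by have := cauchy_sqrt_rec 1; rewrite g1 subrr mulr0 => /eqP;
      rewrite mulf_eq0 pnatr_eq0 orbF => /eqP.
  have := cauchy_sqrt_rec n.+2; rewrite IH mul0r => /eqP.
  by rewrite mulf_eq0 pnatr_eq0 orbF => /eqP.
Qed.

Lemma cauchy_sqrt_scaled x c : (forall j, c j = b j * x ^+ j) ->
  forall n, cauchy c c n = (1 - x%:P * 'X)`_n.
Proof.
  move=> hc n; rewrite (cauchy_ext _ _ _ _ n hc hc) cauchy_scale cauchy_sqrt_sq.
  rewrite coefB coef1 coefCM coefX.
  by case: n => [|[|n]] /=; rewrite ?mul1r ?mulr0 ?mul0r ?subr0 ?sub0r ?mulr1 ?expr1 ?mulN1r.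
Qed.

Lemma cauchy_sqrt_triple x y n :
  let T := cauchy b (cauchy (fun i => b i * x ^+ i) (fun i => b i * y ^+ i)) in
  cauchy T T n = ((1 - 'X) * (1 - x%:P * 'X) * (1 - y%:P * 'X))`_n.
Proof.
  move=> T; pose N := n.+1.
  pose bx := fun i => b i * x ^+ i; pose b_y := fun i => b i * y ^+ i.
  have hT : agree N (trunc N T) (trunc N b * (trunc N bx * trunc N b_y)).
    apply: agree_trans (trunc_cauchy N b _) _.
    exact: agree_mul (agree_refl _ _) (trunc_cauchy _ _ _).
  have hTT : agree N (trunc N (cauchy T T))
     (trunc N (cauchy b b) * trunc N (cauchy bx bx) * trunc N (cauchy b_y b_y)).
    apply: agree_trans (trunc_cauchy N T T) _.
    apply: agree_trans (agree_mul hT hT) _.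
    have -> : trunc N b * (trunc N bx * trunc N b_y) * (trunc N b * (trunc N bx * trunc N b_y)) =
      (trunc N b * trunc N b) * (trunc N bx * trunc N bx) * (trunc N b_y * trunc N b_y) by ring.
    by apply: agree_mul; [apply: agree_mul|]; apply: agree_sym; apply: trunc_cauchy.
  have hP : agree N (trunc N (cauchy T T)) ((1 - 'X) * (1 - x%:P * 'X) * (1 - y%:P * 'X)).
    apply: agree_trans hTT (agree_mul (agree_mul _ _) _); apply: agree_trunc.
    - move=> i; rewrite (cauchy_sqrt_scaled 1 b) ?polyC1 ?mul1r // => j.
      by rewrite expr1n mulr1.
    - exact: cauchy_sqrt_scaled.
    - exact: cauchy_sqrt_scaled.
  by have := hP n (ltnSn n); rewrite trunc_coef.
Qed.

End SqrtOneMinus.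
End Cauchy.
End FormalSeries.

(* cbin n = binomial (2n, n) / 4 ^ n, through its ratio recurrence. *)
Fixpoint cbin (n : nat) : R :=
  match n with O => 1 | S m => cbin m * (2 * INR m + 1) / (2 * INR m + 2) end.

(* Coefficients of sqrt (1 - z) = 1 - sum_(m >= 0) cbin m / (2 m + 2) z ^ (m + 1). *)
Definition sqrt_coef (n : nat) : R :=
  match n with O => 1 | S m => - cbin m / (2 * INR m + 2) end.

Lemma sqrt_coef_rec i : sqrt_coef (S i) * INR (S i) * 2 = sqrt_coef i * (INR i * 2 - 1).
Proof.
  destruct i as [|m]; [simpl; field|].
  cbn [sqrt_coef cbin]. rewrite !S_INR. pose proof (pos_INR m). field. lra.
Qed.

(* The radius of convergence rho is the smallest positive root of 1 - 4 z + 8 z ^ 3, and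
   1 - 4 rho z + 8 rho^3 z^3 = (1 - z) (1 - alpha z) (1 - beta z). *)
Definition rho : R := (sqrt 5 - 1) / 4.
Definition alpha : R := 2 * rho.
Definition beta : R := - (4 * rho ^ 2).

Lemma rho_sq : 4 * rho ^ 2 = 1 - 2 * rho.
Proof. unfold rho. pose proof (sqrt_sqrt 5). nra. Qed.

Definition sqrt_coef_at (x : R) (i : nat) : R := sqrt_coef i * x ^ i.

(* Coefficients of the factor sqrt ((1 - alpha z) (1 - beta z)), analytic beyond rho. *)
Definition h_coef : nat -> R := conv (sqrt_coef_at alpha) (sqrt_coef_at beta).

Definition sqrt_disc_coef (p : nat -> nat) (n : nat) : R :=
  (if Nat.eqb n 0 then 1 else 0) - 2 * INR (p n).


Module GeneratingFunction.
Import all_boot all_algebra Rstruct ring lra GRing.Theory Num.Theory.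
Import FormalSeries.
Local Open Scope ring_scope.

Lemma sum_f_R0_big (f : nat -> R) n : sum_f_R0 f n = \sum_(k < n.+1) f k.
Proof.
  elim: n => [|n IH]; first by rewrite big_ord_recr big_ord0 /= add0r.
  by rewrite big_ord_recr /= -IH.
Qed.

Lemma conv_cauchy (a c : nat -> R) n : conv a c n = cauchy a c n.
Proof. exact: sum_f_R0_big. Qed.

Lemma sqrt_coef_recE i :
  sqrt_coef i.+1 * i.+1%:R * 2%:R = sqrt_coef i * (i%:R * 2%:R - 1).
Proof. by have := sqrt_coef_rec i; rewrite !RealsE. Qed.


Lemma rho_sqE : 4%:R * rho ^+ 2 = 1 - 2%:R * rho.
Proof. by have := rho_sq; rewrite !RealsE. Qed.

(* The discriminant 1 - 4 z + 8 z ^ 3 of the equation P = z + P ^ 2 - 2 z ^ 3. *)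
Definition disc : {poly R} := 1 - 4%:R *: 'X + 8%:R *: 'X^3.

Lemma conv_comm (a c : nat -> R) n : conv a c n = conv c a n.
Proof. by rewrite !conv_cauchy cauchyC. Qed.

Lemma conv_sqrt_coef_atE x n :
  conv (sqrt_coef_at x) (sqrt_coef_at x) n = if n == 0%N then 1 else if n == 1%N then - x else 0.
Proof.
  rewrite conv_cauchy (cauchy_sqrt_scaled sqrt_coef _ sqrt_coef_recE x) // => [|j].
  - rewrite coefB coef1 coefCM coefX.
    by case: n => [|[|n]] /=; rewrite ?mulr0 ?subr0 ?mulr1 ?sub0r.
  - by rewrite /sqrt_coef_at RpowE.
Qed.

Section Counts.
Variable p : nat -> nat.
Hypothesis hp : forall n, counts_pitchfork_free n (p n).

Lemma cauchy_sqrt_disc n : cauchy (sqrt_disc_coef p) (sqrt_disc_coef p) n = disc`_n.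
Proof.
  pose pR k := (p k)%:R : R.
  have p0 : pR 0%N = 0 by rewrite /pR (pf_count_0 p hp).
  have s0 : sqrt_disc_coef p 0 = 1 by rewrite /sqrt_disc_coef (pf_count_0 p hp) !RealsE; lra.
  have sS k : sqrt_disc_coef p k.+1 = - (2%:R * pR k.+1)
    by rewrite /sqrt_disc_coef !RealsE /=; lra.
  rewrite /disc coefD coefB coef1 !coefZ coefX coefXn.
  case: n => [|m]; first by rewrite cauchy0 s0 mulr1 /=; ring.
  rewrite cauchy_square_S s0 sS.
  rewrite (eq_bigr (fun i : 'I_m => 4%:R * (pR i.+1 * pR (m - i)%N))); last first.
    move=> i _; have -> : (m - i = (m - i).-1.+1)%N by rewrite prednK // subn_gt0.
    by rewrite !sS; ring.
  rewrite -mulr_sumr.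
  have hrec : pR 0%N * pR m.+1 *+ 2 + \sum_(i < m) pR i.+1 * pR (m - i)%N
            = if m == 0%N then 0 else pR m.+1 + (if m == 2%N then 2%:R else 0).
    rewrite -cauchy_square_S; case: m => [|m]; first by rewrite cauchy_square_S big_ord0 p0; ring.
    have := pf_count_recurrence p hp m.+2 ltac:(lia).
    rewrite conv_cauchy (cauchy_ext _ _ _ _ _ (fun k => INRE (p k)) (fun k => INRE (p k))).
    by rewrite !RealsE => <-; case: m => [|[|m]].
  move: hrec; rewrite p0 mul0r mul0rn add0r => ->.
  by case: m => [|[|[|m]]] /=; rewrite /pR ?(pf_count_1 p hp); ring.
Qed.

Lemma disc_factor n :
  ((1 - 'X) * (1 - alpha%:P * 'X) * (1 - beta%:P * 'X))`_n = disc`_n * rho ^+ n.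
Proof.
  have e1 : 1 + alpha + beta = 4%:R * rho
    by have := rho_sqE; rewrite /alpha /beta !RealsE /=; lra.
  have e2 : alpha + beta + alpha * beta = 0.
    have -> : alpha + beta + alpha * beta = 2%:R * rho * ((1 - 2%:R * rho) - 4%:R * rho ^+ 2)
      by rewrite /alpha /beta !RealsE /=; ring.
    by rewrite -rho_sqE subrr mulr0.
  have e3 : alpha * beta = - (8%:R * rho ^+ 3) by rewrite /alpha /beta !RealsE /=; ring.
  have -> : (1 - 'X) * (1 - alpha%:P * 'X) * (1 - beta%:P * 'X) =
    1 - (1 + alpha + beta)%:P * 'X + (alpha + beta + alpha * beta)%:P * 'X^2
      - (alpha * beta)%:P * 'X^3 by rewrite !polyCD !polyCM polyC1; ring.
  rewrite e1 e2 e3 /disc !coefD !coefN coef1 !coefCM !coefZ coefX !coefXn ?coef0.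
  by case: n => [|[|[|[|n]]]] /=; ring.
Qed.

Lemma sqrt_disc_splitE n : sqrt_disc_coef p n * rho ^+ n = conv sqrt_coef h_coef n.
Proof.
  rewrite conv_cauchy.
  rewrite (cauchy_ext _ sqrt_coef _ _ n _ (fun i => conv_cauchy _ _ i)) //.
  have hat x i : sqrt_coef_at x i = sqrt_coef i * x ^+ i by rewrite /sqrt_coef_at RpowE.
  rewrite (cauchy_ext _ sqrt_coef _ _ n _ (fun i => cauchy_ext _ _ _ _ i (hat alpha) (hat beta))) //.
  apply: (cauchy_sqrt_unique (fun k => sqrt_disc_coef p k * rho ^+ k)).
  - by rewrite /sqrt_disc_coef (pf_count_0 p hp) !RealsE /=; ring.
  - by rewrite !cauchy0 /= !RealsE /=; ring.
  - move=> k; rewrite cauchy_scale cauchy_sqrt_disc cauchy_sqrt_triple.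
    + by rewrite disc_factor.
    + by [].
    + exact: sqrt_coef_recE.
Qed.

End Counts.

End GeneratingFunction.
Import GeneratingFunction.

Lemma sqrt_disc_split (p : nat -> nat) (hp : forall n, counts_pitchfork_free n (p n)) n :
  rho ^ n * sqrt_disc_coef p n = conv sqrt_coef h_coef n.
Proof.
  rewrite Rstruct.RpowE, Rmult_comm. exact (sqrt_disc_splitE p hp n).
Qed.

Lemma conv_sqrt_coef_at x n : conv (sqrt_coef_at x) (sqrt_coef_at x) n =
  if Nat.eqb n 0 then 1 else if Nat.eqb n 1 then - x else 0.
Proof. rewrite conv_sqrt_coef_atE. destruct n as [|[|n]]; reflexivity. Qed.

Lemma cbin_S n : cbin (S n) * (2 * INR n + 2) = cbin n * (2 * INR n + 1).
Proof. simpl. pose proof (pos_INR n). field. lra. Qed.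

Lemma cbin_pos n : 0 < cbin n.
Proof.
  induction n; simpl; [lra|]. pose proof (pos_INR n).
  apply Rdiv_lt_0_compat; [apply Rmult_lt_0_compat|]; lra.
Qed.

Lemma cbin_sq_le n : (INR n + 1) * cbin n ^ 2 <= 1.
Proof.
  induction n as [|n IH]; [simpl; lra|].
  pose proof (pos_INR n) as Hn. pose proof (cbin_pos n). pose proof (cbin_S n) as E.
  rewrite S_INR. set (c := cbin n) in *. set (d := cbin (S n)) in *. set (k := INR n) in *.
  (* (k + 2) (2k + 1)^2 <= 4 (k + 1)^3 *)
  assert (Hd : d * (2 * k + 2) = c * (2 * k + 1)) by exact E.
  assert (Hsq : (k + 1 + 1) * d ^ 2 * (2 * k + 2) ^ 2 = (k + 2) * c ^ 2 * (2 * k + 1) ^ 2)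
    by (replace ((k + 1 + 1) * d ^ 2 * (2 * k + 2) ^ 2) with ((k + 2) * (d * (2 * k + 2)) ^ 2) by ring;
        rewrite Hd; ring).
  assert (0 <= c ^ 2) by nra.
  assert ((k + 2) * c ^ 2 * (2 * k + 1) ^ 2 <= (2 * k + 2) ^ 2) by nra.
  nra.
Qed.

Lemma cbin_le_1 n : cbin n <= 1.
Proof. pose proof (cbin_sq_le n). pose proof (pos_INR n). pose proof (cbin_pos n). nra. Qed.

Lemma sqrt_coef_abs_le_1 n : Rabs (sqrt_coef n) <= 1.
Proof.
  destruct n as [|m]; simpl sqrt_coef; [rewrite Rabs_R1; lra|].
  pose proof (pos_INR m). pose proof (cbin_pos m). pose proof (cbin_le_1 m).
  rewrite Rabs_left by (apply Rdiv_neg_pos; lra).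
  apply (Rmult_le_reg_r (2 * INR m + 2)); [lra|].
  replace (- (- cbin m / (2 * INR m + 2)) * (2 * INR m + 2)) with (cbin m) by (field; lra). lra.
Qed.

Definition pow32 (n : nat) : R := INR n * sqrt (INR n).

Lemma pow32_nonneg n : 0 <= pow32 n.
Proof. unfold pow32. apply Rmult_le_pos; [apply pos_INR|apply sqrt_pos]. Qed.

Lemma sqrt_coef_decay m : Rabs (sqrt_coef m) * pow32 (S m) <= 2.
Proof.
  unfold pow32. destruct m as [|k].
  - simpl sqrt_coef; simpl INR. rewrite Rabs_R1, sqrt_1. lra.
  - simpl sqrt_coef. pose proof (pos_INR k) as Hk. pose proof (cbin_pos k). pose proof (cbin_sq_le k).
    rewrite Rabs_left by (apply Rdiv_neg_pos; lra).
    rewrite !S_INR. set (c := cbin k) in *. set (s := sqrt (INR k + 1 + 1)).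
    assert (Hs : s * s = INR k + 2) by (unfold s; rewrite sqrt_sqrt; lra).
    assert (0 <= s) by apply sqrt_pos.
    set (X := - (- c / (2 * INR k + 2)) * ((INR k + 1 + 1) * s)).
    assert (EX : X * (2 * INR k + 2) = c * (INR k + 2) * s) by (unfold X; field; lra).
    assert (0 <= X).
    { apply (Rmult_le_reg_r (2 * INR k + 2)); [lra|]. rewrite Rmult_0_l, EX.
      apply Rmult_le_pos; [apply Rmult_le_pos|]; lra. }
    (* X^2 (2k+2)^2 = c^2 (k+2)^3 <= (k+2)^3 / (k+1) <= 16 (k+1)^2 *)
    assert (E2 : X ^ 2 * (2 * INR k + 2) ^ 2 = c ^ 2 * (INR k + 2) ^ 2 * (s * s))
      by (replace (X ^ 2 * (2 * INR k + 2) ^ 2) with ((X * (2 * INR k + 2)) ^ 2) by ring;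
          rewrite EX; ring).
    rewrite Hs in E2.
    assert (c ^ 2 * (INR k + 2) ^ 3 * (INR k + 1) <= (INR k + 2) ^ 3).
    { assert (0 <= (INR k + 2) ^ 3) by (apply pow_le; lra).
      replace (c ^ 2 * (INR k + 2) ^ 3 * (INR k + 1)) with ((INR k + 2) ^ 3 * ((INR k + 1) * c ^ 2))
        by ring.
      nra. }
    assert ((INR k + 2) ^ 3 <= 8 * (INR k + 1) ^ 3) by nra.
    assert (X ^ 2 <= 4) by nra.
    nra.
Qed.

(* Wallis integrals, used to pin down the constant in cbin n ~ 1 / sqrt (pi n). *)
Definition wallis (m : nat) : R := RInt (fun x => sin x ^ m) 0 (PI / 2).

Lemma ex_wallis m : ex_RInt (fun x => sin x ^ m) 0 (PI / 2).
Proof.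
  apply (ex_RInt_continuous (V := R_CompleteNormedModule)). intros z _.
  apply (ex_derive_continuous (fun x => sin x ^ m)). auto_derive; auto.
Qed.

Lemma RInt_primitive (F f : R -> R) a b :
  (forall x, is_derive F x (f x)) -> (forall x, continuous f x) -> RInt f a b = F b - F a.
Proof.
  intros HD HC.
  exact (is_RInt_unique _ _ _ _ (is_RInt_derive F f a b (fun x _ => HD x) (fun x _ => HC x))).
Qed.

(* Integration by parts against -cos x sin x ^ (m+1). *)
Lemma wallis_rec m : INR (m + 2) * wallis (m + 2) = INR (m + 1) * wallis m.
Proof.
  set (F := fun x => - cos x * sin x ^ (m + 1)).
  set (f := fun x => INR (m + 2) * sin x ^ (m + 2) - INR (m + 1) * sin x ^ m).
  assert (HD : forall x, is_derive F x (f x)).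
  { intros x. unfold F, f. auto_derive; auto.
    replace (Init.Nat.pred (m + 1)) with m by lia.
    replace (sin x ^ (m + 1)) with (sin x ^ m * sin x) by (rewrite pow_add; ring).
    replace (sin x ^ (m + 2)) with (sin x ^ m * (sin x * sin x)) by (rewrite pow_add; ring).
    replace (INR (m + 2)) with (INR (m + 1) + 1) by (rewrite !plus_INR; simpl; ring).
    assert (E : cos x * cos x = 1 - sin x * sin x)
      by (pose proof (sin2_cos2 x); unfold Rsqr in *; lra).
    generalize (sin x ^ m) (INR (m + 1)). intros P k.
    replace (- cos x * (1 * cos x * (k * P))) with (- (cos x * cos x) * k * P) by ring.
    rewrite E. ring. }
  assert (HC : forall x, continuous f x).
  { intros x. apply (ex_derive_continuous f). unfold f. auto_derive; auto. }
  pose proof (RInt_primitive F f 0 (PI/2) HD HC) as U1.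
  assert (U2 : RInt f 0 (PI/2) = INR (m + 2) * wallis (m + 2) - INR (m + 1) * wallis m).
  { unfold f, wallis.
    rewrite (RInt_minus (V := R_CompleteNormedModule) (fun x => scal (INR (m + 2)) (sin x ^ (m + 2)))
               (fun x => scal (INR (m + 1)) (sin x ^ m)));
      try apply (ex_RInt_scal (V := R_CompleteNormedModule)), ex_wallis.
    rewrite !(RInt_scal (V := R_CompleteNormedModule)) by apply ex_wallis. reflexivity. }
  rewrite U1 in U2. unfold minus, plus, opp, F in U2. simpl in U2.
  rewrite cos_PI2, sin_0, cos_0, pow_i in U2 by lia. lra.
Qed.

Lemma wallis_0 : wallis 0 = PI / 2.
Proof. unfold wallis. simpl. rewrite RInt_const. unfold scal; simpl. unfold mult; simpl. ring. Qed.

Lemma wallis_1 : wallis 1 = 1.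
Proof.
  unfold wallis. rewrite (RInt_primitive (fun x => - cos x)).
  - rewrite cos_PI2, cos_0. ring.
  - intros x. auto_derive; auto. ring.
  - intros x. apply (ex_derive_continuous (fun x => sin x ^ 1)). auto_derive; auto.
Qed.

Lemma wallis_decr m : wallis (S m) <= wallis m.
Proof.
  apply RInt_le; try apply ex_wallis; [pose proof PI_RGT_0; lra|].
  intros x Hx. simpl.
  assert (0 <= sin x) by (apply sin_ge_0; pose proof PI_RGT_0; lra).
  assert (sin x <= 1) by apply SIN_bound.
  assert (0 <= sin x ^ m) by (apply pow_le; lra).
  nra.
Qed.

Lemma wallis_step m : (INR m + 2) * wallis (S (S m)) = (INR m + 1) * wallis m.
Proof.
  pose proof (wallis_rec m) as H. rewrite !plus_INR in H.
  replace (m + 2)%nat with (S (S m)) in H by lia. simpl INR in H. lra.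
Qed.

Lemma wallis_even n : wallis (2 * n) = PI / 2 * cbin n.
Proof.
  induction n as [|n IH]; [simpl; rewrite wallis_0; ring|].
  pose proof (wallis_step (2 * n)) as H. rewrite IH, mult_INR in H. simpl INR in H.
  pose proof (pos_INR n).
  replace (2 * S n)%nat with (S (S (2 * n))) by lia.
  apply (Rmult_eq_reg_l (2 * INR n + 2)); [|lra].
  replace ((2 * INR n + 2) * (PI / 2 * cbin (S n))) with (PI / 2 * (cbin (S n) * (2 * INR n + 2)))
    by ring.
  rewrite cbin_S. lra.
Qed.

Lemma wallis_odd n : wallis (2 * n + 1) * ((2 * INR n + 1) * cbin n) = 1.
Proof.
  induction n as [|n IH]; [simpl; rewrite wallis_1; ring|].
  pose proof (wallis_step (2 * n + 1)) as H. rewrite plus_INR, mult_INR in H. simpl INR in H.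
  replace (2 * S n + 1)%nat with (S (S (2 * n + 1))) by lia.
  replace (wallis (S (S (2 * n + 1))) * ((2 * INR (S n) + 1) * cbin (S n)))
    with (cbin (S n) * ((1 + 1) * INR n + 1 + 2) * wallis (S (S (2 * n + 1))))
    by (rewrite S_INR; ring).
  rewrite Rmult_assoc, H.
  replace (cbin (S n) * (((1 + 1) * INR n + 1 + 1) * wallis (2 * n + 1)))
    with (wallis (2 * n + 1) * (cbin (S n) * (2 * INR n + 2))) by ring.
  rewrite cbin_S. rewrite <- IH at 2. ring.
Qed.

(* Comparing consecutive Wallis integrals squeezes cbin n ^ 2 between
   2 / (pi (2n+1)) and 2 (2n+2) / (pi (2n+1)^2). *)
Lemma cbin_wallis_bounds n :
  2 <= PI * (2 * INR n + 1) * cbin n ^ 2 /\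
  PI * cbin n ^ 2 * (2 * INR n + 1) ^ 2 <= 2 * (2 * INR n + 2).
Proof.
  pose proof (wallis_decr (2 * n)) as M1. pose proof (wallis_decr (2 * n + 1)) as M2.
  replace (S (2 * n)) with (2 * n + 1)%nat in M1 by lia.
  replace (S (2 * n + 1)) with (2 * S n)%nat in M2 by lia.
  rewrite wallis_even in M1, M2. pose proof (wallis_odd n) as O. pose proof (cbin_S n) as C.
  pose proof (cbin_pos n). pose proof (cbin_pos (S n)). pose proof (pos_INR n).
  set (w := wallis (2 * n + 1)) in *. set (c := cbin n) in *. set (c' := cbin (S n)) in *.
  set (k := INR n) in *. clearbody w c c' k.
  split.
  - (* w <= pi/2 c, multiplied by (2n+1) c *)
    assert (0 <= (PI / 2 * c - w) * ((2 * k + 1) * c)) by (apply Rmult_le_pos; nra).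
    lra.
  - (* pi/2 c' <= w, multiplied by (2n+1) c (2n+2) *)
    assert (0 <= (w - PI / 2 * c') * ((2 * k + 1) * c * (2 * k + 2))).
    { apply Rmult_le_pos; [lra|]. apply Rmult_le_pos; [|lra]. nra. }
    assert (w * ((2 * k + 1) * c) * (2 * k + 2) = 2 * k + 2) by (rewrite O; ring).
    assert (c' * (2 * k + 2) * ((2 * k + 1) * c) = c ^ 2 * (2 * k + 1) ^ 2) by (rewrite C; ring).
    nra.
Qed.

Lemma lim_inv_affine (a b : R) : 0 < a -> is_lim_seq (fun n => / (a * INR n + b)) 0.
Proof.
  intros Ha.
  assert (H : is_lim_seq (fun n => INR n * a + b) p_infty).
  { apply (is_lim_seq_plus _ _ p_infty b); [|apply is_lim_seq_const|reflexivity].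
    apply (is_lim_seq_mult _ _ p_infty a); [apply is_lim_seq_INR|apply is_lim_seq_const|].
    apply is_Rbar_mult_p_infty_pos. exact Ha. }
  apply (is_lim_seq_ext (fun n => / (INR n * a + b))); [intros; rewrite Rmult_comm; reflexivity|].
  exact (is_lim_seq_inv _ _ H ltac:(discriminate)).
Qed.

Lemma lim_one_plus_inv (a b : R) : 0 < a -> is_lim_seq (fun n => 1 + / (a * INR n + b)) 1.
Proof.
  intros Ha.
  pose proof (is_lim_seq_plus' _ _ 1 0 (is_lim_seq_const 1) (lim_inv_affine a b Ha)) as H.
  rewrite Rplus_0_r in H. exact H.
Qed.

Lemma lim_cbin_sq : is_lim_seq (fun n => (INR n + 1) * cbin n ^ 2) (/ PI).
Proof.
  pose proof PI_RGT_0.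
  set (r := fun n => 1 + / (2 * INR n + 1)).
  assert (Hr : is_lim_seq r 1) by (apply lim_one_plus_inv; lra).
  pose proof (is_lim_seq_mult' _ _ (/ PI) 1 (is_lim_seq_const (/ PI)) Hr) as L1.
  pose proof (is_lim_seq_mult' _ _ (/ PI) (1 * 1) (is_lim_seq_const (/ PI))
                (is_lim_seq_mult' _ _ 1 1 Hr Hr)) as L2.
  rewrite Rmult_1_r in L1, L2. rewrite Rmult_1_r in L2.
  refine (is_lim_seq_le_le _ _ _ _ _ L1 L2).
  - intros n. destruct (cbin_wallis_bounds n) as [B1 B2]. pose proof (pos_INR n).
    assert (Er : r n * (2 * INR n + 1) = 2 * INR n + 2) by (unfold r; field; lra).
    assert (0 < r n) by (unfold r; pose proof (Rinv_0_lt_compat (2 * INR n + 1)); lra).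
    split; apply (Rmult_le_reg_l (2 * PI * (2 * INR n + 1) ^ 2)); try nra.
    + replace (2 * PI * (2 * INR n + 1) ^ 2 * (/ PI * r n))
        with (2 * (2 * INR n + 1) * (r n * (2 * INR n + 1))) by (field; lra).
      rewrite Er. nra.
    + replace (2 * PI * (2 * INR n + 1) ^ 2 * (/ PI * (r n * r n)))
        with (2 * (r n * (2 * INR n + 1)) ^ 2) by (field; lra).
      rewrite Er. nra.
Qed.

Lemma lim_sqrt_cbin : is_lim_seq (fun n => sqrt (INR n + 1) * cbin n) (/ sqrt PI).
Proof.
  pose proof PI_RGT_0. rewrite <- sqrt_inv.
  apply (is_lim_seq_ext (fun n => sqrt ((INR n + 1) * cbin n ^ 2))).
  - intros n. pose proof (pos_INR n). pose proof (cbin_pos n).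
    rewrite sqrt_mult, sqrt_pow2 by (try apply pow2_ge_0; lra). reflexivity.
  - apply (is_lim_seq_continuous sqrt), lim_cbin_sq.
    apply continuity_pt_sqrt. apply Rlt_le, Rinv_0_lt_compat. lra.
Qed.

Definition sqrt_coef_const : R := - / 2 * / sqrt PI.

Lemma lim_sqrt_coef : is_lim_seq (fun n => pow32 n * sqrt_coef n) sqrt_coef_const.
Proof.
  apply (is_lim_seq_incr_1 (fun n => pow32 n * sqrt_coef n)).
  apply (is_lim_seq_ext (fun m => - / 2 * (sqrt (INR m + 1) * cbin m))).
  - intros m. unfold pow32. simpl sqrt_coef. rewrite S_INR. pose proof (pos_INR m). field. lra.
  - exact (is_lim_seq_scal_l _ (- / 2) _ lim_sqrt_cbin).
Qed.

Lemma sum_f_R0_lim (G : nat -> nat -> R) (g : nat -> R) J :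
  (forall j, is_lim_seq (fun n => G n j) (g j)) ->
  is_lim_seq (fun n => sum_f_R0 (G n) J) (sum_f_R0 g J).
Proof.
  intros H. induction J; simpl; [apply H|]. apply is_lim_seq_plus'; auto.
Qed.

Lemma Series_infinite_sum (a : nat -> R) : ex_series a -> infinite_sum a (Series a).
Proof. intros H. apply is_series_Reals, Series_correct, H. Qed.

Lemma tannery (G : nat -> nat -> R) (D g : nat -> R) :
  (forall n j, Rabs (G n j) <= D j) -> ex_series D ->
  (forall j, is_lim_seq (fun n => G n j) (g j)) ->
  is_lim_seq (fun n => sum_f_R0 (G n) n) (Series g).
Proof.
  intros HB HD HL.
  assert (Hg : forall j, Rabs (g j) <= D j).
  { intros j. apply (is_lim_seq_le _ _ (Finite (Rabs (g j))) (Finite (D j)) (fun n => HB n j));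
      [exact (is_lim_seq_abs _ _ (HL j))|apply is_lim_seq_const]. }
  assert (Eg : ex_series g)
    by (apply (ex_series_le (K := R_AbsRing) (V := R_CompleteNormedModule) g D); auto).
  apply is_lim_seq_Reals. intros eps Heps. set (e := eps / 5).
  assert (He : 0 < e) by (unfold e; lra).
  destruct (Series_infinite_sum D HD e He) as [J1 HJ1].
  destruct (Series_infinite_sum g Eg e He) as [J2 HJ2].
  set (J := max J1 J2).
  destruct (proj1 (is_lim_seq_Reals _ _) (sum_f_R0_lim G g J HL) e He) as [N1 HN1].
  exists (max J N1). intros n Hn. unfold R_dist in *.
  (* head: close to the partial sum of g; tail: bounded by a tail of D *)
  assert (A1 : Rabs (sum_f_R0 (G n) J - sum_f_R0 g J) < e) by (apply HN1; lia).
  assert (A2 : Rabs (sum_f_R0 g J - Series g) < e) by (apply HJ2; lia).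
  assert (A3 : Rabs (sum_f_R0 D n - Series D) < e) by (apply HJ1; lia).
  assert (A4 : Rabs (sum_f_R0 D J - Series D) < e) by (apply HJ1; lia).
  destruct (Nat.eq_dec J n) as [E|E].
  - rewrite <- E. unfold e in *.
    pose proof (Rabs_triang (sum_f_R0 (G n) J - sum_f_R0 g J) (sum_f_R0 g J - Series g)).
    replace (sum_f_R0 (G n) J - sum_f_R0 g J + (sum_f_R0 g J - Series g))
      with (sum_f_R0 (G n) J - Series g) in * by ring.
    rewrite <- E in *. lra.
  - rewrite (tech2 (G n) J n) by lia. pose proof (tech2 D J n ltac:(lia)) as TD.
    set (T := sum_f_R0 (fun i => G n (S J + i)%nat) (n - S J)) in *.
    set (TD' := sum_f_R0 (fun i => D (S J + i)%nat) (n - S J)) in *.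
    assert (A5 : Rabs T <= TD').
    { eapply Rle_trans; [apply sum_f_R0_triangle|]. apply sum_Rle. intros; apply HB. }
    apply Rabs_def2 in A3, A4.
    pose proof (Rabs_triang (sum_f_R0 (G n) J - sum_f_R0 g J) (sum_f_R0 g J - Series g)).
    pose proof (Rabs_triang (sum_f_R0 (G n) J - sum_f_R0 g J + (sum_f_R0 g J - Series g)) T).
    replace (sum_f_R0 (G n) J - sum_f_R0 g J + (sum_f_R0 g J - Series g) + T)
      with (sum_f_R0 (G n) J + T - Series g) in * by ring.
    unfold e in *. lra.
Qed.

(* n ^ (3/2) <= (j+1)^2 (n-j+1) ^ (3/2): shifting the index by j costs a
   polynomial factor in j only. *)
Lemma pow32_shift n j : (j <= n)%nat -> pow32 n <= INR (S j) ^ 2 * pow32 (S (n - j)).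
Proof.
  intros Hj. unfold pow32.
  set (a := INR n). set (b := INR (S (n - j))). set (c := INR (S j)).
  assert (Hab : a <= c * b) by (unfold a, b, c; rewrite <- mult_INR; apply le_INR; nia).
  assert (Hc : 1 <= c) by (unfold c; rewrite S_INR; pose proof (pos_INR j); lra).
  assert (Hb : 1 <= b) by (unfold b; rewrite S_INR; pose proof (pos_INR (n - j)); lra).
  assert (Ha : 0 <= a) by apply pos_INR.
  assert (S1 : sqrt a <= c * sqrt b).
  { eapply Rle_trans; [apply sqrt_le_1_alt; exact Hab|].
    rewrite sqrt_mult_alt by lra. apply Rmult_le_compat_r; [apply sqrt_pos|].
    rewrite <- (sqrt_pow2 c) at 2 by lra. apply sqrt_le_1_alt. nra. }
  pose proof (sqrt_pos a). pose proof (sqrt_pos b).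
  replace (c ^ 2 * (b * sqrt b)) with ((c * b) * (c * sqrt b)) by ring.
  apply Rmult_le_compat; auto.
Qed.

Lemma lim_shift_ratio j : is_lim_seq (fun n => INR (n + S j) / INR (S n)) 1.
Proof.
  apply (is_lim_seq_ext (fun n => 1 + INR j * / (1 * INR n + 1))).
  - intros n. rewrite plus_INR, !S_INR. pose proof (pos_INR n). field. lra.
  - pose proof (is_lim_seq_mult' _ _ (INR j) 0 (is_lim_seq_const (INR j)) (lim_inv_affine 1 1 Rlt_0_1))
      as H.
    pose proof (is_lim_seq_plus' _ _ 1 _ (is_lim_seq_const 1) H) as H'.
    rewrite Rmult_0_r, Rplus_0_r in H'. exact H'.
Qed.

Section Transfer.
(* Darboux-type transfer: if e decays geometrically, then the coefficients of
   sqrt (1 - z) * E(z) behave like those of sqrt (1 - z), times E(1). *)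
Variables (e : nat -> R) (x : R).
Hypothesis Hx : 0 < x < 1.
Hypothesis He : forall j, Rabs (e j) <= INR (S j) * x ^ j.

Definition majorant (j : nat) : R := 2 * (INR (S j) ^ 3 * x ^ j).

Lemma ex_majorant : ex_series majorant.
Proof.
  assert (H : ex_series (fun n => Rabs (INR (S n) ^ 3 * x ^ n))).
  { apply (ex_series_DAlembert _ x); [lra| |].
    - intros n. apply Rgt_not_eq, Rmult_lt_0_compat; apply pow_lt; [apply lt_0_INR; lia|lra].
    - apply (is_lim_seq_ext (fun n => (INR (S (S n)) / INR (S n)) ^ 3 * x)).
      + intros n. pose proof (lt_0_INR (S n) ltac:(lia)). pose proof (pow_lt x n (proj1 Hx)).
        rewrite Rabs_right.
        * change (x ^ S n) with (x * x ^ n). field. split; lra.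
        * apply Rle_ge, Rmult_le_pos; [apply Rmult_le_pos; apply pow_le; [apply pos_INR|lra]|].
          apply Rlt_le, Rinv_0_lt_compat, Rmult_lt_0_compat; apply pow_lt; lra.
      + assert (L : is_lim_seq (fun n => INR (S (S n)) / INR (S n)) 1).
        { apply (is_lim_seq_ext (fun n => INR (n + S 1) / INR (S n)));
            [intros; f_equal; f_equal; lia|apply lim_shift_ratio]. }
        pose proof (is_lim_seq_mult' _ _ _ x (is_lim_seq_mult' _ _ _ _ L
                      (is_lim_seq_mult' _ _ _ _ L (is_lim_seq_mult' _ _ _ _ L (is_lim_seq_const 1))))
                      (is_lim_seq_const x)) as L3.
        rewrite !Rmult_1_l in L3. exact L3. }
  apply ex_series_Rabs in H. exact (ex_series_scal_l (K := R_AbsRing) 2 _ H).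
Qed.

Definition transfer_term (n j : nat) : R :=
  if (j <=? n)%nat then e j * (sqrt_coef (n - j) * pow32 n) else 0.

Lemma transfer_term_sum n : pow32 n * conv sqrt_coef e n = sum_f_R0 (transfer_term n) n.
Proof.
  rewrite conv_comm. unfold conv. rewrite scal_sum.
  apply sum_eq. intros j Hj. unfold transfer_term.
  replace (j <=? n)%nat with true by (symmetry; apply Nat.leb_le; lia). ring.
Qed.

Lemma transfer_term_bound n j : Rabs (transfer_term n j) <= majorant j.
Proof.
  unfold transfer_term, majorant.
  assert (0 <= INR (S j) ^ 3 * x ^ j) by (apply Rmult_le_pos; apply pow_le; [apply pos_INR|lra]).
  destruct (j <=? n)%nat eqn:E; [|rewrite Rabs_R0; lra].
  apply Nat.leb_le in E.
  rewrite !Rabs_mult, (Rabs_right (pow32 n)) by (apply Rle_ge, pow32_nonneg).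
  pose proof (He j). pose proof (pow32_shift n j E). pose proof (sqrt_coef_decay (n - j)).
  pose proof (Rabs_pos (e j)). pose proof (Rabs_pos (sqrt_coef (n - j))).
  assert (A : Rabs (sqrt_coef (n - j)) * pow32 n <= 2 * INR (S j) ^ 2).
  { eapply Rle_trans; [apply Rmult_le_compat_l; eauto|].
    replace (Rabs (sqrt_coef (n - j)) * (INR (S j) ^ 2 * pow32 (S (n - j)))) with
      (INR (S j) ^ 2 * (Rabs (sqrt_coef (n - j)) * pow32 (S (n - j)))) by ring.
    rewrite (Rmult_comm 2). apply Rmult_le_compat_l; [apply pow_le, pos_INR|auto]. }
  eapply Rle_trans; [apply Rmult_le_compat; eauto; apply Rmult_le_pos; auto; apply pow32_nonneg|].
  apply Req_le. ring.
Qed.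

Lemma transfer_term_lim j : is_lim_seq (fun n => transfer_term n j) (e j * sqrt_coef_const).
Proof.
  apply (is_lim_seq_incr_n _ (S j)).
  set (q := fun n : nat => INR (n + S j) / INR (S n)).
  apply (is_lim_seq_ext (fun n => e j * ((pow32 (S n) * sqrt_coef (S n)) * (q n * sqrt (q n))))).
  - intros n. unfold transfer_term.
    replace (j <=? n + S j)%nat with true by (symmetry; apply Nat.leb_le; lia).
    replace (n + S j - j)%nat with (S n) by lia.
    unfold q, pow32. pose proof (lt_0_INR (S n) ltac:(lia)).
    rewrite sqrt_div_alt by lra.
    pose proof (sqrt_lt_R0 _ H).
    field. split; lra.
  - pose proof (lim_shift_ratio j) as Hq. fold q in Hq.
    pose proof (is_lim_seq_continuous sqrt q 1 (continuity_pt_sqrt 1 ltac:(lra)) Hq) as Hs.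
    rewrite sqrt_1 in Hs.
    pose proof (is_lim_seq_mult' _ _ _ _ (is_lim_seq_const (e j))
                  (is_lim_seq_mult' _ _ _ _ (proj1 (is_lim_seq_incr_1 _ _) lim_sqrt_coef)
                     (is_lim_seq_mult' _ _ _ _ Hq Hs))) as L.
    rewrite !Rmult_1_r in L. exact L.
Qed.

Lemma transfer :
  is_lim_seq (fun n => pow32 n * conv sqrt_coef e n) (sqrt_coef_const * Series e).
Proof.
  pose proof (tannery transfer_term majorant (fun j => e j * sqrt_coef_const)
                transfer_term_bound ex_majorant transfer_term_lim) as H.
  rewrite Series_scal_r, Rmult_comm in H.
  exact (is_lim_seq_ext _ _ _ (fun n => eq_sym (transfer_term_sum n)) H).
Qed.

End Transfer.

Lemma rho_bounds : 1/4 < rho < 3/8.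
Proof. unfold rho. pose proof (sqrt_sqrt 5 ltac:(lra)). pose proof (sqrt_pos 5). split; nra. Qed.

Lemma alpha_bounds : 0 < alpha < 1.
Proof. unfold alpha. pose proof rho_bounds. lra. Qed.

Lemma beta_abs : Rabs beta <= alpha.
Proof.
  unfold beta, alpha. pose proof rho_sq. pose proof rho_bounds.
  rewrite Rabs_Ropp, Rabs_right by nra. lra.
Qed.

Lemma sqrt_coef_at_abs x i : Rabs (sqrt_coef_at x i) <= Rabs x ^ i.
Proof.
  unfold sqrt_coef_at. rewrite Rabs_mult, <- RPow_abs.
  pose proof (sqrt_coef_abs_le_1 i). pose proof (Rabs_pos (sqrt_coef i)).
  pose proof (pow_le (Rabs x) i (Rabs_pos x)). nra.
Qed.

Lemma h_coef_bound j : Rabs (h_coef j) <= INR (S j) * alpha ^ j.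
Proof.
  unfold h_coef, conv. eapply Rle_trans; [apply sum_f_R0_triangle|].
  rewrite Rmult_comm, <- sum_cte. apply sum_Rle. intros i Hi.
  pose proof alpha_bounds. pose proof beta_abs.
  pose proof (sqrt_coef_at_abs alpha i) as Ha. pose proof (sqrt_coef_at_abs beta (j - i)) as Hb.
  rewrite (Rabs_right alpha) in Ha by lra.
  assert (Hp : Rabs beta ^ (j - i) <= alpha ^ (j - i))
    by (apply pow_incr; split; [apply Rabs_pos|auto]).
  replace (alpha ^ j) with (alpha ^ i * alpha ^ (j - i)) by (rewrite <- pow_add; f_equal; lia).
  rewrite Rabs_mult.
  apply Rmult_le_compat; try apply Rabs_pos; lra.
Qed.

Lemma is_series_linear (c : R) :
  is_series (fun n => if Nat.eqb n 0 then 1 else if Nat.eqb n 1 then - c else 0) (1 - c).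
Proof.
  apply is_series_Reals. intros eps Heps. exists 1%nat. intros n Hn.
  replace (sum_f_R0 _ n) with (1 - c).
  - unfold Rdist. rewrite Rminus_eq_0, Rabs_R0. exact Heps.
  - induction n as [|n IH]; [lia|]. destruct n; [simpl; ring|].
    rewrite tech5, <- IH by lia. simpl. ring.
Qed.

Lemma Series_sq (a : nat -> R) (c : R) :
  ex_series (fun n => Rabs (a n)) ->
  (forall n, conv a a n = if Nat.eqb n 0 then 1 else if Nat.eqb n 1 then - c else 0) ->
  Series a * Series a = 1 - c.
Proof.
  intros Ha Hc.
  assert (Ea : ex_series a) by (apply ex_series_Rabs, Ha).
  rewrite <- (is_series_unique _ _ (is_series_mult a a _ _ (Series_correct _ Ea) (Series_correct _ Ea) Ha Ha)).
  apply is_series_unique. apply (is_series_ext _ _ _ (fun n => eq_sym (Hc n))), is_series_linear.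
Qed.

Lemma ex_series_sqrt_coef_at x : Rabs x < 1 -> ex_series (fun n => Rabs (sqrt_coef_at x n)).
Proof.
  intros Hx.
  apply (ex_series_le (K := R_AbsRing) (V := R_CompleteNormedModule) _ (fun n => Rabs x ^ n)).
  - intros n. change (norm (Rabs (sqrt_coef_at x n))) with (Rabs (Rabs (sqrt_coef_at x n))).
    rewrite Rabs_Rabsolu. apply sqrt_coef_at_abs.
  - apply ex_series_geom. rewrite Rabs_Rabsolu. exact Hx.
Qed.

Lemma Series_h_coef_sq : Series h_coef * Series h_coef = 3 - 8 * rho.
Proof.
  pose proof alpha_bounds as Hal. pose proof beta_abs as Hbe.
  assert (Ea : ex_series (fun n => Rabs (sqrt_coef_at alpha n)))
    by (apply ex_series_sqrt_coef_at; rewrite Rabs_right; lra).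
  assert (Eb : ex_series (fun n => Rabs (sqrt_coef_at beta n)))
    by (apply ex_series_sqrt_coef_at; lra).
  pose proof (is_series_mult _ _ _ _ (Series_correct _ (ex_series_Rabs _ Ea))
                (Series_correct _ (ex_series_Rabs _ Eb)) Ea Eb) as Hprod.
  assert (Eh : Series h_coef = Series (sqrt_coef_at alpha) * Series (sqrt_coef_at beta))
    by exact (is_series_unique _ _ Hprod).
  rewrite Eh.
  replace (Series (sqrt_coef_at alpha) * Series (sqrt_coef_at beta) *
           (Series (sqrt_coef_at alpha) * Series (sqrt_coef_at beta))) with
    ((Series (sqrt_coef_at alpha) * Series (sqrt_coef_at alpha)) *
     (Series (sqrt_coef_at beta) * Series (sqrt_coef_at beta))) by ring.
  rewrite (Series_sq _ alpha Ea (conv_sqrt_coef_at alpha)), (Series_sq _ beta Eb (conv_sqrt_coef_at beta)).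
  unfold alpha, beta. pose proof rho_sq. nra.
Qed.

Definition pf_const : R := Series h_coef / (4 * sqrt PI).

Section Asymptotics.
Variable p : nat -> nat.
Hypothesis hp : forall n, counts_pitchfork_free n (p n).

Lemma lim_pf_count_normalized :
  is_lim_seq (fun n => pow32 n * rho ^ n * INR (p n)) pf_const.
Proof.
  pose proof PI_RGT_0. assert (0 < sqrt PI) by (apply sqrt_lt_R0; lra).
  apply (is_lim_seq_ext (fun n => - / 2 * (pow32 n * conv sqrt_coef h_coef n))).
  - intros n. rewrite <- (sqrt_disc_split p hp n). unfold sqrt_disc_coef.
    destruct n as [|n]; [unfold pow32; simpl; ring|].
    replace (if Nat.eqb (S n) 0 then 1 else 0) with 0 by reflexivity. field.
  - replace pf_const with (- / 2 * (sqrt_coef_const * Series h_coef))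
      by (unfold pf_const, sqrt_coef_const; field; lra).
    exact (is_lim_seq_scal_l _ _ _ (transfer h_coef alpha alpha_bounds h_coef_bound)).
Qed.

(* H > 0: it is a limit of nonnegative quantities (times 4 sqrt pi), and
   H ^ 2 = 3 - 8 rho does not vanish. *)
Lemma Series_h_coef_pos : 0 < Series h_coef.
Proof.
  pose proof PI_RGT_0. assert (Hs : 0 < sqrt PI) by (apply sqrt_lt_R0; lra).
  assert (Hnn : 0 <= pf_const).
  { apply (is_lim_seq_le (fun _ => 0) (fun n => pow32 n * rho ^ n * INR (p n)) 0 pf_const);
      [|apply is_lim_seq_const|apply lim_pf_count_normalized].
    intros n. pose proof rho_bounds. apply Rmult_le_pos; [apply Rmult_le_pos|apply pos_INR].
    - apply pow32_nonneg.
    - apply pow_le. lra. }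
  assert (0 <= Series h_coef).
  { replace (Series h_coef) with (pf_const * (4 * sqrt PI)) by (unfold pf_const; field; lra).
    apply Rmult_le_pos; lra. }
  pose proof Series_h_coef_sq. pose proof rho_bounds. nra.
Qed.

End Asymptotics.

(* The normalised quantity of the theorem is pf_const divided by
   n^(3/2) rho^n m, once 4 rho - 24 rho^3 is recognised as H ^ 2. *)
Lemma theorem_expr_eq (m : R) n : (1 <= n)%nat -> 0 < Series h_coef ->
  (1/4) * sqrt ((4 * rho - 24 * rho ^ 3) / (PI * INR n ^ 3)) * (1 / rho) ^ n / m
  = pf_const / (pow32 n * rho ^ n * m).
Proof.
  intros Hn HH. pose proof PI_RGT_0. pose proof rho_bounds.
  assert (Hn0 : 0 < INR n) by (apply lt_0_INR; lia).
  assert (Hs : 0 < sqrt (INR n)) by (apply sqrt_lt_R0; lra).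
  assert (E : 4 * rho - 24 * rho ^ 3 = Series h_coef * Series h_coef)
    by (rewrite Series_h_coef_sq; pose proof rho_sq; nra).
  rewrite E, sqrt_div_alt, sqrt_square, sqrt_mult_alt by (try apply Rmult_lt_0_compat; try apply pow_lt; lra).
  replace (INR n ^ 3) with (INR n ^ 2 * INR n) by ring.
  rewrite sqrt_mult_alt, sqrt_pow2 by (try apply pow_le; lra).
  replace ((1 / rho) ^ n) with (/ rho ^ n) by (unfold Rdiv; rewrite Rmult_1_l, pow_inv; reflexivity).
  assert (0 < sqrt PI) by (apply sqrt_lt_R0; lra).
  assert (0 < rho ^ n) by (apply pow_lt; lra).
  unfold pf_const, pow32.
  destruct (Req_dec m 0) as [->|Hm].
  - unfold Rdiv. rewrite !Rmult_0_r, Rinv_0. ring.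
  - field. repeat split; lra.
Qed.

Theorem mainTheorem6 (p : nat -> nat)
  (hp : forall n, counts_pitchfork_free n (p n)) :
  let R := (sqrt 5 - 1) / 4 in
  Un_cv (fun n : nat =>
           ((1/4) * sqrt ((4 * R - 24 * R ^ 3) / (PI * INR n ^ 3)) * (1 / R) ^ n)
           / INR (p n)) 1.
Proof.
  intros R. change R with rho. clear R.
  pose proof (Series_h_coef_pos p hp) as HH.
  assert (K : 0 < pf_const).
  { pose proof PI_RGT_0. assert (0 < sqrt PI) by (apply sqrt_lt_R0; lra).
    unfold pf_const. apply Rdiv_lt_0_compat; lra. }
  apply is_lim_seq_Reals.
  (* the quantity is pf_const / (n^(3/2) rho^n p n), and the denominator tends to pf_const *)
  apply (is_lim_seq_ext_loc (fun n => pf_const / (pow32 n * rho ^ n * INR (p n)))).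
  - exists 1%nat. intros n Hn. symmetry. apply theorem_expr_eq; assumption.
  - replace (Finite 1) with (Finite (pf_const / pf_const)) by (f_equal; field; lra).
    apply is_lim_seq_div'; [apply is_lim_seq_const|apply lim_pf_count_normalized, hp|lra].
Qed.
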